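(* Let $N\ge2$, $\gamma\in(\tfrac12,\tfrac32)$, and let $\Gamma$ satisfy (A1) and (A2) with constant $C_1>0$. Let $\delta\ge0$ and $\alpha\ge 2\gamma$, and take the communication weight $\psi_\delta(s)=(s-\delta)^{-\alpha}$ for $s>\delta$. Suppose the initial data satisfy $|x_{i0}-x_{j0}|>\delta$ for all $1\le i\ne j\le N$. Then for any global smooth solution $(x(t),v(t))$ of the NL CS system with weight $\psi_\delta$ we have $T_0=\infty$. Moreover, for all $t\in[0,T_0)$: (i) if $\alpha=2\gamma$, $$\mathcal{L}^0(t)+\frac{1}{2C_1\gamma(N-1)}\sum_i|v_i(t)|^2\le\frac{2\gamma-1}{2\gamma}\,t+\mathcal{L}^0(0)+\frac{1}{2C_1\gamma(N-1)}\sum_i|v_{i0}|^2;$$ (ii) if $\alpha>2\gamma$, then with $\beta=\frac{\alpha}{2\gamma}-1$, $$\mathcal{L}^\beta(t)+\frac{\beta}{2C_1\gamma(N-1)}\sum_i|v_i(t)|^2\le\frac{(2\gamma-1)\beta}{2\gamma}\,t+\mathcal{L}^\beta(0)+\frac{\beta}{2C_1\gamma(N-1)}\sum_i|v_{i0}|^2.$$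
   Context: The NL CS system: $\frac{d}{dt}x_i=v_i$, $\frac{d}{dt}v_i=\frac1N\sum_{j=1}^N\psi(|x_i-x_j|)\Gamma(v_j-v_i)$, $i=1,\dots,N$, with $x_i,v_i\in\mathbb{R}^d$, initial data $(x_{i0},v_{i0})$, here with $\psi=\psi_\delta$. (A1): $\Gamma(-v)=-\Gamma(v)$ for all $v\in\mathbb{R}^d$. (A2): $\langle\Gamma(v),v\rangle\ge C_1|v|^{2\gamma}$ for all $v\in\mathbb{R}^d$. Sums $\sum_i$ run over $1\le i\le N$, and $\sum_{i\ne j}$ over all ordered pairs with $i\ne j$. For a configuration with $|x_i-x_j|>\delta$ for all $i\ne j$, define for $\beta>0$ $$\mathcal{L}^\beta(t)=\frac{1}{N(N-1)}\sum_{i\ne j}\big(|x_i(t)-x_j(t)|-\delta\big)^{-\beta},\qquad \mathcal{L}^0(t)=\frac{1}{N(N-1)}\sum_{i\ne j}\log\big(|x_i(t)-x_j(t)|-\delta\big).$$ A collision at time $t$ means $|x_i(t)-x_j(t)|\le\delta$ for some $i\ne j$. The maximal collisionless life-span is $T_0:=\sup\{s\ge0:\ \text{no solution of the system with the given data has a collision on }[0,s)\}$. *)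

From Stdlib Require Import Reals Lra Lia.
Open Scope R_scope.

(* A vector of R^d is represented by its coordinate function nat -> R;
   only the coordinates k < d are meaningful. *)
Definition Vec := nat -> R.

Fixpoint fsum (n : nat) (f : nat -> R) : R :=
  match n with
  | O => 0
  | S m => fsum m f + f m
  end.

Definition dot (d : nat) (u w : Vec) : R := fsum d (fun k => u k * w k).
Definition norm (d : nat) (u : Vec) : R := sqrt (dot d u u).
Definition dist (d : nat) (u w : Vec) : R := norm d (fun k => u k - w k).

(* real power s^p for s >= 0 and p > 0 (with 0^p = 0) *)
Definition powR (s p : R) : R :=
  if Rlt_dec 0 s then Rpower s p else 0.

(* Gamma is a genuine map R^d -> R^d: its meaningful coordinates
   depend only on the meaningful coordinates of its argument. *)
Definition Gamma_on_Rd (d : nat) (Gamma : Vec -> Vec) : Prop :=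
  forall w w' : Vec, (forall k, (k < d)%nat -> w k = w' k) ->
  forall k, (k < d)%nat -> Gamma w k = Gamma w' k.

Definition CS_A1 (d : nat) (Gamma : Vec -> Vec) : Prop :=
  forall (w : Vec) k, (k < d)%nat -> Gamma (fun l => - w l) k = - Gamma w k.

Definition CS_A2 (d : nat) (Gamma : Vec -> Vec) (gamma C1 : R) : Prop :=
  forall w : Vec, dot d (Gamma w) w >= C1 * powR (norm d w) (2 * gamma).

Definition psi_delta (delta alpha s : R) : R := Rpower (s - delta) (- alpha).

Definition collisionless (N d : nat) (delta : R) (X : nat -> Vec) : Prop :=
  forall i j, (i < N)%nat -> (j < N)%nat -> i <> j -> dist d (X i) (X j) > delta.

Definition right_continuous_at (f : R -> R) (t0 : R) : Prop :=
  forall eps, 0 < eps -> exists del, 0 < del /\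
    forall s, t0 <= s < t0 + del -> Rabs (f s - f t0) < eps.

(* (x, v) : time -> particle -> Vec is a global solution on [0, oo) of the
   NL CS system with weight psi_delta: x, v are continuous on [0,oo)
   (right-continuous at 0), and at every time t > 0 at which the
   configuration is collisionless (so that psi_delta is defined) they are
   differentiable and satisfy the ODEs. *)
Definition CS_solution (N d : nat) (delta alpha : R) (Gamma : Vec -> Vec)
    (x v : R -> nat -> Vec) : Prop :=
  (forall i k, (i < N)%nat -> (k < d)%nat ->
     right_continuous_at (fun s => x s i k) 0 /\
     right_continuous_at (fun s => v s i k) 0 /\
     (forall t, 0 < t -> continuity_pt (fun s => x s i k) t /\
                         continuity_pt (fun s => v s i k) t)) /\
  (forall t i k, 0 < t -> collisionless N d delta (x t) ->
     (i < N)%nat -> (k < d)%nat ->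
     derivable_pt_lim (fun s => x s i k) t (v t i k) /\
     derivable_pt_lim (fun s => v s i k) t
       (/ INR N * fsum N (fun j =>
          if Nat.eq_dec j i then 0 else
          psi_delta delta alpha (dist d (x t i) (x t j)) *
          Gamma (fun l => v t j l - v t i l) k))).

Definition Lbeta (N d : nat) (delta beta : R) (X : nat -> Vec) : R :=
  / (INR N * INR (N - 1)) *
  fsum N (fun i => fsum N (fun j =>
    if Nat.eq_dec i j then 0 else Rpower (dist d (X i) (X j) - delta) (- beta))).

Definition L0 (N d : nat) (delta : R) (X : nat -> Vec) : R :=
  / (INR N * INR (N - 1)) *
  fsum N (fun i => fsum N (fun j =>
    if Nat.eq_dec i j then 0 else ln (dist d (X i) (X j) - delta))).

Definition kinetic (N d : nat) (V : nat -> Vec) : R :=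
  fsum N (fun i => norm d (V i) ^ 2).

From Pilot Require Import Defs.
From Stdlib Require Import Reals Arith Lra Lia FunctionalExtensionality Classical.
(* Rmetric also defines [dist]; re-import so that [dist] is [Defs.dist]. *)
Import Defs.
Open Scope R_scope.

(* Along collisionless motion take a barrier f whose slope satisfies
   |f'(s)| w <= A s^(-alpha) w^(2 gamma) + B, and the energy
     E = mean over ordered pairs of f(|x_i - x_j| - delta) + A / (C1 (N-1)) * sum_i |v_i|^2.
   By (A1) the kinetic part decreases at rate (A/C1) psi <Gamma(v_j - v_i), v_j - v_i> per
   pair, which by (A2) dominates A s^(-alpha) |v_j - v_i|^(2 gamma), while the pair part
   changes at most at rate |f'(s)| |v_j - v_i|; hence E' <= B and E grows at most linearly.
   Young's inequality with exponent 2 gamma gives the slope condition for f = ln when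
   alpha = 2 gamma and for f = s^(-beta) when alpha > 2 gamma: these are (i) and (ii).
   For the barriers ln(1 + 1/s) and s^(-beta), which are nonnegative and blow up at 0,
   the same bound keeps every pair distance away from delta up to the supremum of the
   collisionless times, and continuity then pushes collisionlessness past it. *)

Lemma fsum_ext n f g : (forall k, (k < n)%nat -> f k = g k) -> fsum n f = fsum n g.
Proof.
  induction n as [|n IH]; intros H; simpl; [reflexivity|].
  rewrite IH, H; [reflexivity|lia|intros; apply H; lia].
Qed.

Lemma fsum_plus n f g : fsum n (fun k => f k + g k) = fsum n f + fsum n g.
Proof. induction n as [|n IH]; simpl; [lra|]. rewrite IH; ring. Qed.

Lemma fsum_scal n c f : fsum n (fun k => c * f k) = c * fsum n f.
Proof. induction n as [|n IH]; simpl; [ring|]. rewrite IH; ring. Qed.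

Lemma fsum_const n c : fsum n (fun _ => c) = INR n * c.
Proof. induction n as [|n IH]; simpl fsum; [simpl; ring|]. rewrite IH, S_INR; ring. Qed.

Lemma fsum_le n f g : (forall k, (k < n)%nat -> f k <= g k) -> fsum n f <= fsum n g.
Proof.
  induction n as [|n IH]; intros H; simpl; [lra|].
  apply Rplus_le_compat; [apply IH; intros; apply H|apply H]; lia.
Qed.

Lemma fsum_nonneg n f : (forall k, (k < n)%nat -> 0 <= f k) -> 0 <= fsum n f.
Proof.
  intros H. apply Rle_trans with (fsum n (fun _ => 0)).
  - rewrite fsum_const; lra.
  - now apply fsum_le.
Qed.

Lemma fsum_ge_term n f i :
  (forall k, (k < n)%nat -> 0 <= f k) -> (i < n)%nat -> f i <= fsum n f.
Proof.
  induction n as [|n IH]; intros H Hi; simpl; [lia|].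
  destruct (Nat.eq_dec i n) as [->|Hne].
  - assert (0 <= fsum n f) by (apply fsum_nonneg; intros; apply H; lia). lra.
  - assert (f i <= fsum n f) by (apply IH; [intros; apply H|]; lia).
    assert (0 <= f n) by (apply H; lia). lra.
Qed.

Lemma fsum_swap n m F :
  fsum n (fun i => fsum m (fun j => F i j)) = fsum m (fun j => fsum n (fun i => F i j)).
Proof.
  induction n as [|n IH]; simpl.
  - rewrite fsum_const; ring.
  - rewrite IH, <- fsum_plus. reflexivity.
Qed.

Definition pair_sum (N : nat) (F : nat -> nat -> R) : R :=
  fsum N (fun i => fsum N (fun j => if Nat.eq_dec i j then 0 else F i j)).

Lemma pair_sum_le N F G :
  (forall i j, (i < N)%nat -> (j < N)%nat -> i <> j -> F i j <= G i j) ->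
  pair_sum N F <= pair_sum N G.
Proof.
  intros H. apply fsum_le; intros i Hi; apply fsum_le; intros j Hj.
  destruct (Nat.eq_dec i j); [lra|auto].
Qed.

Lemma pair_sum_ge_term N F i j :
  (forall i j, (i < N)%nat -> (j < N)%nat -> i <> j -> 0 <= F i j) ->
  (i < N)%nat -> (j < N)%nat -> i <> j -> F i j <= pair_sum N F.
Proof.
  intros H Hi Hj Hij.
  assert (Hnn : forall a b, (a < N)%nat -> (b < N)%nat ->
            0 <= if Nat.eq_dec a b then 0 else F a b)
    by (intros a b Ha Hb; destruct (Nat.eq_dec a b); [lra|auto]).
  apply Rle_trans with (fsum N (fun b => if Nat.eq_dec i b then 0 else F i b)).
  - pattern (F i j) at 1.
    replace (F i j) with (if Nat.eq_dec i j then 0 else F i j)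
      by (destruct (Nat.eq_dec i j); [lia|reflexivity]).
    apply (fsum_ge_term N (fun b => if Nat.eq_dec i b then 0 else F i b)); auto.
  - apply (fsum_ge_term N (fun a => fsum N (fun b => if Nat.eq_dec a b then 0 else F a b)));
      auto.
    intros a Ha; apply fsum_nonneg; auto.
Qed.

Lemma pair_sum_lin N a b F G :
  pair_sum N (fun i j => a * F i j + b * G i j) = a * pair_sum N F + b * pair_sum N G.
Proof.
  unfold pair_sum. rewrite <- !fsum_scal, <- fsum_plus. apply fsum_ext; intros i _.
  rewrite <- !fsum_scal, <- fsum_plus. apply fsum_ext; intros j _.
  destruct (Nat.eq_dec i j); ring.
Qed.

Lemma pair_sum_transpose N F : pair_sum N (fun i j => F j i) = pair_sum N F.
Proof.
  unfold pair_sum. rewrite fsum_swap. apply fsum_ext; intros j _; apply fsum_ext; intros i _.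
  destruct (Nat.eq_dec i j), (Nat.eq_dec j i); try lia; reflexivity.
Qed.

Lemma pair_sum_const N c : (1 <= N)%nat -> pair_sum N (fun _ _ => c) = INR N * INR (N - 1) * c.
Proof.
  intros HN. unfold pair_sum.
  assert (Hrow : forall n i, fsum n (fun j => if Nat.eq_dec i j then 0 else c)
                             = INR n * c - (if lt_dec i n then c else 0)).
  { intros n i. induction n as [|n IH]; simpl fsum.
    - destruct (lt_dec i 0); [lia|simpl; ring].
    - rewrite IH, S_INR.
      destruct (Nat.eq_dec i n), (lt_dec i n), (lt_dec i (S n)); try lia; ring. }
  rewrite (fsum_ext N _ (fun _ => INR (N - 1) * c)).
  - rewrite fsum_const; ring.
  - intros i Hi. rewrite Hrow, minus_INR by lia. destruct (lt_dec i N); [simpl; ring|lia].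
Qed.

Lemma dot_self_nonneg d u : 0 <= dot d u u.
Proof. apply fsum_nonneg; intros; nra. Qed.

Lemma norm_nonneg d u : 0 <= norm d u.
Proof. apply sqrt_pos. Qed.

Lemma norm_sqr d u : norm d u ^ 2 = dot d u u.
Proof. apply pow2_sqrt, dot_self_nonneg. Qed.

Lemma dot_self_sub_scal d u w l :
  dot d (fun k => u k - l * w k) (fun k => u k - l * w k)
  = dot d u u - 2 * l * dot d u w + l ^ 2 * dot d w w.
Proof.
  unfold dot.
  rewrite (fsum_ext d _ (fun k => (u k * u k + (-2 * l) * (u k * w k)) + l ^ 2 * (w k * w k)))
    by (intros; ring).
  rewrite !fsum_plus, !fsum_scal. ring.
Qed.

Lemma cauchy_schwarz d u w : Rabs (dot d u w) <= norm d u * norm d w.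
Proof.
  set (a := dot d u u); set (b := dot d w w); set (c := dot d u w).
  assert (Hb : 0 <= b) by apply dot_self_nonneg.
  assert (Hq : forall l, 0 <= a - 2 * l * c + l ^ 2 * b)
    by (intros l; unfold a, b, c; rewrite <- dot_self_sub_scal; apply dot_self_nonneg).
  assert (Hc : c ^ 2 <= a * b).
  { destruct (Req_dec b 0) as [Hb0|Hb0].
    - destruct (Req_dec c 0) as [Hc0|Hc0]; [rewrite Hc0, Hb0; lra|].
      specialize (Hq ((a + 1) / (2 * c))). rewrite Hb0 in Hq.
      replace (a - 2 * ((a + 1) / (2 * c)) * c + ((a + 1) / (2 * c)) ^ 2 * 0) with (-1)
        in Hq by (field; auto). lra.
    - specialize (Hq (c / b)).
      replace (a - 2 * (c / b) * c + (c / b) ^ 2 * b) with ((a * b - c ^ 2) / b) in Hq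
        by (field; auto).
      apply Rmult_le_compat_r with (r := b) in Hq; [|lra].
      replace ((a * b - c ^ 2) / b * b) with (a * b - c ^ 2) in Hq by (field; auto). lra. }
  unfold norm; fold a b.
  rewrite <- sqrt_mult, <- sqrt_Rsqr_abs by (apply dot_self_nonneg).
  apply sqrt_le_1_alt. unfold Rsqr. lra.
Qed.

Lemma dist_comm d u w : dist d u w = dist d w u.
Proof. unfold dist, norm, dot. f_equal. apply fsum_ext; intros; ring. Qed.

Definition radial_velocity (d : nat) (X V : nat -> Vec) (i j : nat) : R :=
  dot d (fun k => X i k - X j k) (fun k => V i k - V j k) / dist d (X i) (X j).

Lemma radial_velocity_bound d X V i j :
  0 < dist d (X i) (X j) -> Rabs (radial_velocity d X V i j) <= dist d (V i) (V j).
Proof.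
  intros Hr. unfold radial_velocity, Rdiv.
  rewrite Rabs_mult, Rabs_inv, (Rabs_right (dist _ _ _)) by lra.
  apply Rmult_le_reg_r with (dist d (X i) (X j)); [exact Hr|].
  rewrite Rmult_assoc, Rinv_l, Rmult_1_r, Rmult_comm by lra. apply cauchy_schwarz.
Qed.

Lemma deriv_ext f g t l :
  (forall s, f s = g s) -> derivable_pt_lim f t l -> derivable_pt_lim g t l.
Proof. intros H. replace g with f by (apply functional_extensionality; auto). auto. Qed.

Lemma deriv_value f t l l' : l = l' -> derivable_pt_lim f t l -> derivable_pt_lim f t l'.
Proof. now intros ->. Qed.

Lemma deriv_const c t : derivable_pt_lim (fun _ => c) t 0.
Proof. apply derivable_pt_lim_const. Qed.

Lemma deriv_plus f g t l m : derivable_pt_lim f t l -> derivable_pt_lim g t m ->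
  derivable_pt_lim (fun s => f s + g s) t (l + m).
Proof. apply (derivable_pt_lim_plus f g). Qed.

Lemma deriv_minus f g t l m : derivable_pt_lim f t l -> derivable_pt_lim g t m ->
  derivable_pt_lim (fun s => f s - g s) t (l - m).
Proof. apply (derivable_pt_lim_minus f g). Qed.

Lemma deriv_mult f g t l m : derivable_pt_lim f t l -> derivable_pt_lim g t m ->
  derivable_pt_lim (fun s => f s * g s) t (l * g t + f t * m).
Proof. apply (derivable_pt_lim_mult f g). Qed.

Lemma deriv_scal c f t l : derivable_pt_lim f t l ->
  derivable_pt_lim (fun s => c * f s) t (c * l).
Proof.
  intros H. apply (deriv_value _ _ (0 * f t + c * l)); [ring|].
  apply deriv_mult; [apply deriv_const|exact H].
Qed.

Lemma deriv_comp f g t l m : derivable_pt_lim f t l -> derivable_pt_lim g (f t) m ->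
  derivable_pt_lim (fun s => g (f s)) t (m * l).
Proof. intros; now apply (derivable_pt_lim_comp f g). Qed.

Lemma deriv_fsum n F D t :
  (forall m, (m < n)%nat -> derivable_pt_lim (fun s => F s m) t (D m)) ->
  derivable_pt_lim (fun s => fsum n (F s)) t (fsum n D).
Proof.
  induction n as [|n IH]; intros H; simpl; [apply deriv_const|].
  apply deriv_plus; [apply IH; intros; apply H|apply H]; lia.
Qed.

Lemma cont_ext f g t : (forall s, f s = g s) -> continuity_pt f t -> continuity_pt g t.
Proof. intros H. replace g with f by (apply functional_extensionality; auto). auto. Qed.

Lemma cont_const c t : continuity_pt (fun _ => c) t.
Proof. now apply continuity_pt_const. Qed.

Lemma cont_plus f g t : continuity_pt f t -> continuity_pt g t ->
  continuity_pt (fun s => f s + g s) t.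
Proof. apply (continuity_pt_plus f g). Qed.

Lemma cont_minus f g t : continuity_pt f t -> continuity_pt g t ->
  continuity_pt (fun s => f s - g s) t.
Proof. apply (continuity_pt_minus f g). Qed.

Lemma cont_mult f g t : continuity_pt f t -> continuity_pt g t ->
  continuity_pt (fun s => f s * g s) t.
Proof. apply (continuity_pt_mult f g). Qed.

Lemma cont_comp f g t : continuity_pt f t -> continuity_pt g (f t) ->
  continuity_pt (fun s => g (f s)) t.
Proof. apply (continuity_pt_comp f g). Qed.

Lemma cont_fsum n F t : (forall m, (m < n)%nat -> continuity_pt (fun s => F s m) t) ->
  continuity_pt (fun s => fsum n (F s)) t.
Proof.
  induction n as [|n IH]; intros H; simpl; [apply cont_const|].
  apply cont_plus; [apply IH; intros; apply H|apply H]; lia.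
Qed.

Lemma continuity_pt_eps f t0 : continuity_pt f t0 ->
  forall eps, 0 < eps -> exists del, 0 < del /\
    forall s, Rabs (s - t0) < del -> Rabs (f s - f t0) < eps.
Proof.
  intros H eps He. destruct (H eps He) as [del [Hd Hs]]. exists del; split; [exact Hd|].
  intros s Hs'. destruct (Req_dec s t0) as [->|Hne].
  - rewrite Rminus_diag, Rabs_R0; exact He.
  - apply Hs. now split.
Qed.

(* Extending a path by its value at 0 to negative times turns right continuity at 0
   into continuity. *)
Lemma continuity_pt_clamp y t0 :
  right_continuous_at y 0 -> (forall t, 0 < t -> continuity_pt y t) -> 0 <= t0 ->
  continuity_pt (fun s => y (Rmax 0 s)) t0.
Proof.
  intros Hr Hc Ht0 eps He.
  destruct (Req_dec t0 0) as [->|Hne].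
  - destruct (Hr eps He) as [del [Hd Hs]]. exists del; split; [exact Hd|].
    intros s [_ Hs']. simpl in *. unfold R_dist in *. rewrite (Rmax_right 0 0) by lra.
    apply Hs. revert Hs'. unfold Rmax. destruct (Rle_dec 0 s); split_Rabs; lra.
  - destruct (continuity_pt_eps _ _ (Hc t0 ltac:(lra)) eps He) as [del [Hd Hs]].
    exists (Rmin del t0); split; [apply Rmin_glb_lt; lra|].
    intros s [_ Hs']. simpl in *. unfold R_dist in *.
    pose proof (Rmin_l del t0); pose proof (Rmin_r del t0).
    rewrite !Rmax_right; [apply Hs|lra|]; revert Hs'; split_Rabs; lra.
Qed.

Lemma right_continuous_at_of_clamp f :
  continuity_pt (fun s => f (Rmax 0 s)) 0 -> right_continuous_at f 0.
Proof.
  intros H eps He. destruct (continuity_pt_eps _ _ H eps He) as [del [Hd Hs]].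
  exists del; split; [exact Hd|]. intros s Hs'.
  specialize (Hs s). rewrite !Rmax_right in Hs by lra. apply Hs.
  rewrite Rminus_0_r, Rabs_right; lra.
Qed.

Lemma Rpower_1_l p : Rpower 1 p = 1.
Proof. unfold Rpower. rewrite ln_1, Rmult_0_r. apply exp_0. Qed.

Lemma bernoulli_Rpower a p : 0 < a -> 1 <= p -> 1 + p * (a - 1) <= Rpower a p.
Proof.
  intros Ha Hp.
  set (h := fun c => Rpower c p - p * c).
  set (h' := fun c => p * Rpower c (p - 1) - p * 1).
  assert (Dh : forall c, 0 < c -> derivable_pt_lim h c (h' c)).
  { intros c Hc. apply deriv_minus; [now apply derivable_pt_lim_power|].
    apply deriv_scal, derivable_pt_lim_id. }
  assert (Hh1 : h 1 = 1 - p) by (unfold h; rewrite Rpower_1_l; ring).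
  enough (1 - p <= h a) by (unfold h in *; lra).
  destruct (Rtotal_order a 1) as [Hlt|[->|Hgt]]; [| lra |].
  - destruct (MVT_cor2 h h' a 1 Hlt) as [c [Hc [Hac Hc1]]]; [intros c Hc; apply Dh; lra|].
    pose proof (Rle_Rpower_l c 1 (p - 1) ltac:(lra) ltac:(lra)).
    rewrite Rpower_1_l in *.
    assert (h' c <= 0) by (unfold h'; nra). nra.
  - destruct (MVT_cor2 h h' 1 a Hgt) as [c [Hc [H1c Hca]]]; [intros c Hc; apply Dh; lra|].
    pose proof (Rle_Rpower_l 1 c (p - 1) ltac:(lra) ltac:(lra)).
    rewrite Rpower_1_l in *.
    assert (0 <= h' c) by (unfold h'; nra). nra.
Qed.

Lemma young_powR a p : 0 <= a -> 1 < p -> a <= powR a p / p + (p - 1) / p.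
Proof.
  intros Ha Hp. unfold powR. destruct (Rlt_dec 0 a) as [Hpos|Hz].
  - pose proof (bernoulli_Rpower a p Hpos ltac:(lra)).
    apply Rmult_le_reg_l with p; [lra|].
    replace (p * (Rpower a p / p + (p - 1) / p)) with (Rpower a p + (p - 1)) by (field; lra).
    lra.
  - replace a with 0 by lra. replace (0 / p + (p - 1) / p) with ((p - 1) / p) by (field; lra).
    apply Rlt_le, Rdiv_lt_0_compat; lra.
Qed.

Lemma Rpower_pos x p : 0 < Rpower x p.
Proof. apply exp_pos. Qed.

Lemma young_Rpower_mult s w p q : 0 < s -> 0 <= w -> 1 < p ->
  Rpower s (- q) * w <= Rpower s (- (p * q)) * powR w p / p + (p - 1) / p.
Proof.
  intros Hs Hw Hp.
  replace (Rpower s (- (p * q)) * powR w p) with (powR (Rpower s (- q) * w) p).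
  { apply young_powR; [|exact Hp]. apply Rmult_le_pos; [apply Rlt_le, Rpower_pos|exact Hw]. }
  unfold powR. destruct (Rlt_dec 0 w) as [Hw'|Hw'].
  - destruct (Rlt_dec 0 (Rpower s (- q) * w)) as [_|Hn].
    + rewrite <- Rpower_mult_distr, Rpower_mult by (apply Rpower_pos || exact Hw').
      f_equal; f_equal; ring.
    + exfalso. apply Hn, Rmult_lt_0_compat; [apply Rpower_pos|exact Hw'].
  - replace w with 0 by lra. rewrite Rmult_0_r.
    destruct (Rlt_dec 0 0); [lra|ring].
Qed.

Definition slope_dominated (gamma alpha A B : R) (f' : R -> R) : Prop :=
  forall s w, 0 < s -> 0 <= w ->
    Rabs (f' s) * w <= A * (Rpower s (- alpha) * powR w (2 * gamma)) + B.

Lemma slope_dominated_inv gamma : 1 / 2 < gamma ->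
  slope_dominated gamma (2 * gamma) (/ (2 * gamma)) ((2 * gamma - 1) / (2 * gamma))
    (fun s => / s).
Proof.
  intros Hg s w Hs Hw. rewrite Rabs_right by (apply Rle_ge, Rlt_le, Rinv_0_lt_compat, Hs).
  pose proof (young_Rpower_mult s w (2 * gamma) 1 Hs Hw ltac:(lra)) as Hy.
  rewrite Rpower_Ropp, Rpower_1, Rmult_1_r in Hy by exact Hs.
  unfold Rdiv in Hy. lra.
Qed.

Lemma slope_dominated_power gamma alpha beta : 1 / 2 < gamma -> 0 < beta ->
  alpha = 2 * gamma * (beta + 1) ->
  slope_dominated gamma alpha (beta / (2 * gamma)) ((2 * gamma - 1) * beta / (2 * gamma))
    (fun s => - beta * Rpower s (- beta - 1)).
Proof.
  intros Hg Hb Ha s w Hs Hw.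
  rewrite Rabs_mult, Rabs_left, Rabs_right by (lra || apply Rle_ge, Rlt_le, Rpower_pos).
  pose proof (young_Rpower_mult s w (2 * gamma) (beta + 1) Hs Hw ltac:(lra)) as Hy.
  rewrite <- Ha in Hy. replace (- beta - 1) with (- (beta + 1)) by ring.
  apply Rmult_le_compat_l with (r := beta) in Hy; [|lra].
  replace (beta / (2 * gamma) * (Rpower s (- alpha) * powR w (2 * gamma))
           + (2 * gamma - 1) * beta / (2 * gamma))
    with (beta * (Rpower s (- alpha) * powR w (2 * gamma) / (2 * gamma)
                  + (2 * gamma - 1) / (2 * gamma))) by (field; lra).
  lra.
Qed.

Lemma slope_dominated_le gamma alpha A B f' g' :
  (forall s, 0 < s -> Rabs (g' s) <= Rabs (f' s)) ->
  slope_dominated gamma alpha A B f' -> slope_dominated gamma alpha A B g'.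
Proof.
  intros Hle Hf s w Hs Hw. eapply Rle_trans; [|apply Hf; assumption].
  apply Rmult_le_compat_r; auto.
Qed.

Lemma pair_sum_ext N F G :
  (forall i j, (i < N)%nat -> (j < N)%nat -> i <> j -> F i j = G i j) ->
  pair_sum N F = pair_sum N G.
Proof.
  intros H. apply fsum_ext; intros i Hi; apply fsum_ext; intros j Hj.
  destruct (Nat.eq_dec i j); auto.
Qed.

Lemma deriv_pair_sum N F D t :
  (forall i j, (i < N)%nat -> (j < N)%nat -> i <> j ->
     derivable_pt_lim (fun s => F s i j) t (D i j)) ->
  derivable_pt_lim (fun s => pair_sum N (F s)) t (pair_sum N D).
Proof.
  intros H. apply deriv_fsum; intros i Hi; apply deriv_fsum; intros j Hj.
  destruct (Nat.eq_dec i j); [apply deriv_const|auto].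
Qed.

Lemma cont_pair_sum N F t :
  (forall i j, (i < N)%nat -> (j < N)%nat -> i <> j -> continuity_pt (fun s => F s i j) t) ->
  continuity_pt (fun s => pair_sum N (F s)) t.
Proof.
  intros H. apply cont_fsum; intros i Hi; apply cont_fsum; intros j Hj.
  destruct (Nat.eq_dec i j); [apply cont_const|auto].
Qed.

Definition cs_force (N d : nat) (delta alpha : R) (Gamma : Vec -> Vec) (X V : nat -> Vec)
    (i : nat) : Vec :=
  fun k => / INR N * fsum N (fun j => if Nat.eq_dec j i then 0 else
    psi_delta delta alpha (dist d (X i) (X j)) * Gamma (fun l => V j l - V i l) k).

Definition interaction_energy (N d : nat) (delta : R) (f : R -> R) (X : nat -> Vec) : R :=
  / (INR N * INR (N - 1)) * pair_sum N (fun i j => f (dist d (X i) (X j) - delta)).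

Lemma power_of_cs_force N d delta alpha Gamma X V :
  Gamma_on_Rd d Gamma -> CS_A1 d Gamma ->
  fsum N (fun i => dot d (cs_force N d delta alpha Gamma X V i) (V i))
  = - / 2 * / INR N * pair_sum N (fun i j =>
      psi_delta delta alpha (dist d (X i) (X j)) *
      dot d (Gamma (fun l => V j l - V i l)) (fun l => V j l - V i l)).
Proof.
  intros HGamma HA1.
  set (psi := fun i j => psi_delta delta alpha (dist d (X i) (X j))).
  set (H := fun i j => psi i j * dot d (Gamma (fun l => V j l - V i l)) (V i)).
  assert (Hrows : fsum N (fun i => dot d (cs_force N d delta alpha Gamma X V i) (V i))
                  = / INR N * pair_sum N H).
  { unfold pair_sum. rewrite <- fsum_scal. apply fsum_ext; intros i _.
    unfold dot at 1, cs_force.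
    rewrite (fsum_ext d _ (fun k => fsum N (fun j => / INR N * V i k *
       (if Nat.eq_dec j i then 0 else psi i j * Gamma (fun l => V j l - V i l) k))))
      by (intros; rewrite fsum_scal; unfold psi; ring).
    rewrite fsum_swap, <- fsum_scal. apply fsum_ext; intros j _.
    destruct (Nat.eq_dec j i), (Nat.eq_dec i j); try lia.
    - rewrite (fsum_ext d _ (fun _ => 0)), fsum_const by (intros; ring). ring.
    - unfold H, dot. rewrite <- !fsum_scal. apply fsum_ext; intros; ring. }
  (* (A1) makes Gamma odd, so each unordered pair contributes -psi <Gamma w, w>. *)
  assert (Hsym : forall i j, H i j + H j i
     = -1 * (psi i j * dot d (Gamma (fun l => V j l - V i l)) (fun l => V j l - V i l))).
  { intros i j. unfold H.
    replace (psi j i) with (psi i j) by (unfold psi; now rewrite dist_comm).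
    assert (Hodd : dot d (Gamma (fun l => V j l - V i l)) (V i)
                   + dot d (Gamma (fun l => V i l - V j l)) (V j)
                   = -1 * dot d (Gamma (fun l => V j l - V i l)) (fun l => V j l - V i l)).
    { unfold dot. rewrite <- fsum_plus, <- fsum_scal. apply fsum_ext; intros k Hk.
      rewrite (HGamma (fun l => V i l - V j l) (fun l => - (V j l - V i l))), HA1
        by (intros; ring || exact Hk).
      ring. }
    rewrite <- Rmult_plus_distr_l, Hodd. ring. }
  rewrite Hrows.
  replace (pair_sum N H) with (/ 2 * (1 * pair_sum N H + 1 * pair_sum N (fun i j => H j i)))
    by (rewrite pair_sum_transpose; field).
  rewrite <- pair_sum_lin.
  rewrite (pair_sum_ext N _ (fun i j => -1 * (psi i j * dot d (Gamma (fun l => V j l - V i l))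
                                              (fun l => V j l - V i l)) + 0 * 0))
    by (intros; rewrite <- Hsym; ring).
  rewrite (pair_sum_lin N (-1) 0). unfold psi. ring.
Qed.

Lemma energy_rate_le N d gamma C1 delta alpha Gamma f' A B X V :
  (2 <= N)%nat -> Gamma_on_Rd d Gamma -> CS_A1 d Gamma -> 0 < C1 ->
  CS_A2 d Gamma gamma C1 -> 0 <= delta -> collisionless N d delta X -> 0 <= A ->
  slope_dominated gamma alpha A B f' ->
  / (INR N * INR (N - 1)) * pair_sum N (fun i j =>
      f' (dist d (X i) (X j) - delta) * radial_velocity d X V i j)
  + A / (C1 * (INR N - 1)) *
      (2 * fsum N (fun i => dot d (cs_force N d delta alpha Gamma X V i) (V i)))
  <= B.
Proof.
  intros HN HGamma HA1 HC1 HA2 Hdelta Hcoll HA Hslope.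
  rewrite power_of_cs_force by assumption.
  assert (HN1 : INR (N - 1) = INR N - 1) by (rewrite minus_INR by lia; reflexivity).
  assert (HN2 : 2 <= INR N) by (apply (le_INR 2); exact HN).
  set (K := / (INR N * INR (N - 1))).
  assert (HK : 0 < K) by (apply Rinv_0_lt_compat; rewrite HN1; nra).
  set (G := fun i j => psi_delta delta alpha (dist d (X i) (X j)) *
      dot d (Gamma (fun l => V j l - V i l)) (fun l => V j l - V i l)).
  set (F := fun i j => f' (dist d (X i) (X j) - delta) * radial_velocity d X V i j).
  replace (K * pair_sum N F + A / (C1 * (INR N - 1)) * (2 * (- / 2 * / INR N * pair_sum N G)))
    with (K * pair_sum N (fun i j => 1 * F i j + (- (A / C1)) * G i j))
    by (rewrite pair_sum_lin; unfold K; rewrite HN1; field; lra).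
  apply Rle_trans with (K * pair_sum N (fun _ _ => B)).
  2:{ rewrite pair_sum_const by lia. unfold K. right. field. rewrite HN1; nra. }
  apply Rmult_le_compat_l; [lra|]. apply pair_sum_le; intros i j Hi Hj Hij.
  assert (Hr : dist d (X i) (X j) > delta) by (apply Hcoll; auto).
  set (s := dist d (X i) (X j) - delta).
  set (w := fun l => V j l - V i l).
  set (P := powR (norm d w) (2 * gamma)).
  assert (Hw : norm d w = dist d (V i) (V j)) by apply dist_comm.
  assert (Hpsi : 0 < psi_delta delta alpha (dist d (X i) (X j))) by apply Rpower_pos.
  assert (Hdiss : C1 * P <= dot d (Gamma w) w) by apply Rge_le, HA2.
  assert (Hradial : F i j <= A * (Rpower s (- alpha) * P) + B).
  { apply Rle_trans with (Rabs (f' s) * norm d w).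
    - unfold F. eapply Rle_trans; [apply Rle_abs|]. rewrite Rabs_mult, Hw.
      apply Rmult_le_compat_l; [apply Rabs_pos|apply radial_velocity_bound; lra].
    - apply Hslope; [unfold s; lra|apply norm_nonneg]. }
  assert (A * (Rpower s (- alpha) * P) <= A / C1 * G i j).
  { unfold G. fold w. change (psi_delta delta alpha (dist d (X i) (X j)))
      with (Rpower s (- alpha)) in *.
    replace (A / C1 * (Rpower s (- alpha) * dot d (Gamma w) w))
      with (A * Rpower s (- alpha) * (dot d (Gamma w) w / C1)) by (field; lra).
    rewrite <- Rmult_assoc. apply Rmult_le_compat_l; [nra|].
    apply Rmult_le_reg_l with C1; [lra|]. replace (C1 * (dot d (Gamma w) w / C1))
      with (dot d (Gamma w) w) by (field; lra). exact Hdiss. }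
  lra.
Qed.

Lemma derivable_pt_lim_dist d (x v : R -> nat -> Vec) t i j :
  (forall k, (k < d)%nat ->
     derivable_pt_lim (fun s => x s i k) t (v t i k) /\
     derivable_pt_lim (fun s => x s j k) t (v t j k)) ->
  0 < dist d (x t i) (x t j) ->
  derivable_pt_lim (fun s => dist d (x s i) (x s j)) t (radial_velocity d (x t) (v t) i j).
Proof.
  intros Hx Hr. unfold dist, norm in *.
  set (q := dot d (fun k => x t i k - x t j k) (fun k => x t i k - x t j k)) in *.
  assert (Hq : 0 < q).
  { destruct (dot_self_nonneg d (fun k => x t i k - x t j k)) as [Hlt|Heq]; [exact Hlt|].
    unfold q in Hr. rewrite <- Heq, sqrt_0 in Hr. lra. }
  apply (deriv_value _ _ (/ (2 * sqrt q) * fsum d (fun k =>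
     (v t i k - v t j k) * (x t i k - x t j k) + (x t i k - x t j k) * (v t i k - v t j k)))).
  - unfold radial_velocity, dist, norm. fold q.
    rewrite (fsum_ext d _ (fun k => 2 * ((x t i k - x t j k) * (v t i k - v t j k))))
      by (intros; ring).
    rewrite fsum_scal. unfold dot. field. apply Rgt_not_eq, sqrt_lt_R0, Hq.
  - apply (deriv_comp (fun s => dot d (fun k => x s i k - x s j k) (fun k => x s i k - x s j k))
                      sqrt); [|now apply derivable_pt_lim_sqrt].
    apply deriv_fsum; intros k Hk. destruct (Hx k Hk).
    apply (deriv_mult (fun s => x s i k - x s j k) (fun s => x s i k - x s j k));
      apply deriv_minus; assumption.
Qed.

Lemma continuity_pt_dist d (X : R -> nat -> Vec) t i j :
  (forall k, (k < d)%nat ->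
     continuity_pt (fun s => X s i k) t /\ continuity_pt (fun s => X s j k) t) ->
  continuity_pt (fun s => dist d (X s i) (X s j)) t.
Proof.
  intros H.
  apply (cont_comp (fun s => dot d (fun k => X s i k - X s j k) (fun k => X s i k - X s j k))
                   sqrt); [|apply continuity_pt_sqrt, dot_self_nonneg].
  apply cont_fsum; intros k Hk. destruct (H k Hk).
  apply cont_mult; apply cont_minus; assumption.
Qed.

Lemma derivable_pt_lim_interaction_energy N d delta f f' (x v : R -> nat -> Vec) t :
  (forall i k, (i < N)%nat -> (k < d)%nat ->
     derivable_pt_lim (fun s => x s i k) t (v t i k)) ->
  0 <= delta -> collisionless N d delta (x t) ->
  (forall s, 0 < s -> derivable_pt_lim f s (f' s)) ->
  derivable_pt_lim (fun s => interaction_energy N d delta f (x s)) t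
    (/ (INR N * INR (N - 1)) * pair_sum N (fun i j =>
       f' (dist d (x t i) (x t j) - delta) * radial_velocity d (x t) (v t) i j)).
Proof.
  intros Hx Hdelta Hcoll Hf. apply deriv_scal, deriv_pair_sum; intros i j Hi Hj Hij.
  assert (Hr : dist d (x t i) (x t j) > delta) by (apply Hcoll; auto).
  apply (deriv_value _ _ (f' (dist d (x t i) (x t j) - delta) *
                          (radial_velocity d (x t) (v t) i j - 0))); [ring|].
  apply (deriv_comp (fun s => dist d (x s i) (x s j) - delta) f); [|apply Hf; lra].
  apply deriv_minus; [|apply deriv_const].
  apply derivable_pt_lim_dist; [intros; split; apply Hx; auto|lra].
Qed.

Lemma continuity_pt_interaction_energy N d delta f (X : R -> nat -> Vec) t :
  (forall i k, (i < N)%nat -> (k < d)%nat -> continuity_pt (fun s => X s i k) t) ->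
  collisionless N d delta (X t) -> (forall s, 0 < s -> continuity_pt f s) ->
  continuity_pt (fun s => interaction_energy N d delta f (X s)) t.
Proof.
  intros HX Hcoll Hf. apply cont_mult; [apply cont_const|].
  apply cont_pair_sum; intros i j Hi Hj Hij.
  assert (Hr : dist d (X t i) (X t j) > delta) by (apply Hcoll; auto).
  apply (cont_comp (fun s => dist d (X s i) (X s j) - delta) f); [|apply Hf; lra].
  apply cont_minus; [|apply cont_const].
  apply continuity_pt_dist; intros; split; apply HX; auto.
Qed.

Lemma derivable_pt_lim_kinetic N d (V : R -> nat -> Vec) (F : nat -> Vec) t :
  (forall i k, (i < N)%nat -> (k < d)%nat -> derivable_pt_lim (fun s => V s i k) t (F i k)) ->
  derivable_pt_lim (fun s => kinetic N d (V s)) t (2 * fsum N (fun i => dot d (F i) (V t i))).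
Proof.
  intros HV.
  apply (deriv_ext (fun s => fsum N (fun i => dot d (V s i) (V s i))));
    [intros s; unfold kinetic; apply fsum_ext; intros; now rewrite norm_sqr|].
  apply (deriv_value _ _ (fsum N (fun i => fsum d (fun k => F i k * V t i k + V t i k * F i k)))).
  - rewrite <- fsum_scal. apply fsum_ext; intros i _.
    unfold dot. rewrite <- fsum_scal. apply fsum_ext; intros; ring.
  - apply deriv_fsum; intros i Hi; apply deriv_fsum; intros k Hk.
    apply deriv_mult; apply HV; assumption.
Qed.

Lemma continuity_pt_kinetic N d (V : R -> nat -> Vec) t :
  (forall i k, (i < N)%nat -> (k < d)%nat -> continuity_pt (fun s => V s i k) t) ->
  continuity_pt (fun s => kinetic N d (V s)) t.
Proof.
  intros HV.
  apply (cont_ext (fun s => fsum N (fun i => dot d (V s i) (V s i))));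
    [intros s; unfold kinetic; apply fsum_ext; intros; now rewrite norm_sqr|].
  apply cont_fsum; intros i Hi; apply cont_fsum; intros k Hk.
  apply cont_mult; apply HV; assumption.
Qed.

Lemma linear_growth_of_rate_le (E DE : R -> R) B T :
  (forall s, 0 < s < T -> derivable_pt_lim E s (DE s)) ->
  (forall s, 0 < s < T -> DE s <= B) ->
  right_continuous_at E 0 ->
  forall t, 0 <= t < T -> E t <= B * t + E 0.
Proof.
  intros HD HB Hr t [Ht0 HtT].
  assert (Hmono : forall a, 0 < a < t -> E t - B * t <= E a - B * a).
  { intros a Ha.
    destruct (MVT_cor2 (fun s => E s - B * s) (fun s => DE s - B * 1) a t ltac:(lra))
      as [c [Hc Hac]].
    { intros c Hc. apply deriv_minus; [apply HD; lra|apply deriv_scal, derivable_pt_lim_id]. }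
    assert (DE c <= B) by (apply HB; lra). nra. }
  destruct (Req_dec t 0) as [->|Ht]; [lra|].
  apply Rnot_lt_le; intros Hgt.
  set (eps := (E t - B * t - E 0) / 2).
  destruct (Hr eps ltac:(unfold eps; lra)) as [del [Hdel Hclose]].
  set (a := Rmin (del / 2) (Rmin (t / 2) (eps / (Rabs B + 1)))).
  assert (Ha_del : a <= del / 2) by apply Rmin_l.
  assert (Ha_t : a <= t / 2) by (eapply Rle_trans; [apply Rmin_r|apply Rmin_l]).
  assert (Ha_eps : a * (Rabs B + 1) <= eps).
  { assert (a <= eps / (Rabs B + 1)) by (eapply Rle_trans; [apply Rmin_r|apply Rmin_r]).
    pose proof (Rabs_pos B).
    apply Rmult_le_compat_r with (r := Rabs B + 1) in H; [|lra].
    unfold Rdiv in H. rewrite Rmult_assoc, Rinv_l, Rmult_1_r in H by lra. exact H. }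
  assert (Ha : 0 < a).
  { pose proof (Rabs_pos B).
    repeat apply Rmin_glb_lt; try lra. apply Rdiv_lt_0_compat; unfold eps; lra. }
  specialize (Hclose a ltac:(lra)). specialize (Hmono a ltac:(lra)).
  pose proof (Rle_abs B); pose proof (Rle_abs (- B)); rewrite Rabs_Ropp in *.
  revert Hclose; unfold eps in *; split_Rabs; nra.
Qed.

Lemma uniform_radius n (P : nat -> R -> Prop) :
  (forall i r r', 0 < r' <= r -> P i r -> P i r') ->
  (forall i, (i < n)%nat -> exists r, 0 < r /\ P i r) ->
  exists r, 0 < r /\ forall i, (i < n)%nat -> P i r.
Proof.
  intros Hmono. induction n as [|n IH]; intros H.
  - exists 1. split; [lra|intros; lia].
  - destruct IH as [r1 [Hr1 H1]]; [intros; apply H; lia|].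
    destruct (H n ltac:(lia)) as [r2 [Hr2 H2]].
    exists (Rmin r1 r2). split; [now apply Rmin_glb_lt|].
    intros i Hi. destruct (Nat.eq_dec i n) as [->|Hne].
    + apply Hmono with r2; [split; [now apply Rmin_glb_lt|apply Rmin_r]|exact H2].
    + apply Hmono with r1; [split; [now apply Rmin_glb_lt|apply Rmin_l]|apply H1; lia].
Qed.

Lemma collisionless_near N d delta (X : R -> nat -> Vec) T :
  (forall i k, (i < N)%nat -> (k < d)%nat -> continuity_pt (fun s => X s i k) T) ->
  collisionless N d delta (X T) ->
  exists r, 0 < r /\ forall s, Rabs (s - T) < r -> collisionless N d delta (X s).
Proof.
  intros HX Hcoll.
  destruct (uniform_radius N (fun i r => forall j, (j < N)%nat -> i <> j ->
              forall s, Rabs (s - T) < r -> dist d (X s i) (X s j) > delta))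
    as [r [Hr Hall]].
  - intros i r r' Hr' Hp j Hj Hij s Hs. apply Hp; auto; lra.
  - intros i Hi.
    apply (uniform_radius N (fun j r => i <> j ->
             forall s, Rabs (s - T) < r -> dist d (X s i) (X s j) > delta)).
    + intros j r r' Hr' Hp Hij s Hs. apply Hp; auto; lra.
    + intros j Hj. destruct (Nat.eq_dec i j) as [->|Hij].
      * exists 1. split; [lra|contradiction].
      * assert (HT : dist d (X T i) (X T j) > delta) by (apply Hcoll; auto).
        destruct (continuity_pt_eps _ _
                    (continuity_pt_dist d X T i j ltac:(intros; split; apply HX; auto))
                    (dist d (X T i) (X T j) - delta) ltac:(lra)) as [r [Hr Hs]].
        exists r. split; [exact Hr|]. intros _ s Hs'. specialize (Hs s Hs').
        revert Hs; split_Rabs; lra.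
  - exists r. split; [exact Hr|]. intros s Hs i j Hi Hj Hij. now apply Hall.
Qed.

Lemma interaction_energy_ge_term N d delta f X i j :
  (2 <= N)%nat -> (forall s, 0 < s -> 0 <= f s) -> collisionless N d delta X ->
  (i < N)%nat -> (j < N)%nat -> i <> j ->
  / (INR N * INR (N - 1)) * f (dist d (X i) (X j) - delta) <= interaction_energy N d delta f X.
Proof.
  intros HN Hf Hcoll Hi Hj Hij. apply Rmult_le_compat_l.
  - apply Rlt_le, Rinv_0_lt_compat, Rmult_lt_0_compat; apply lt_0_INR; lia.
  - apply (pair_sum_ge_term N (fun a b => f (dist d (X a) (X b) - delta))); auto.
    intros a b Ha Hb Hab. apply Hf. assert (dist d (X a) (X b) > delta) by (apply Hcoll; auto).
    lra.
Qed.

Definition blows_up_at_0 (f : R -> R) : Prop :=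
  forall M, exists eta, 0 < eta /\ forall s, 0 < s < eta -> M < f s.

Lemma collisionless_at_limit N d delta f M (X : R -> nat -> Vec) T :
  (2 <= N)%nat -> (forall s, 0 < s -> 0 <= f s) -> blows_up_at_0 f -> 0 < T ->
  (forall i k, (i < N)%nat -> (k < d)%nat -> continuity_pt (fun s => X s i k) T) ->
  (forall s, 0 <= s < T -> collisionless N d delta (X s)) ->
  (forall s, 0 <= s < T -> interaction_energy N d delta f (X s) <= M) ->
  collisionless N d delta (X T).
Proof.
  intros HN Hf0 Hblow HT HX Hcoll HM i j Hi Hj Hij. apply Rnot_le_gt; intros Hle.
  set (K := / (INR N * INR (N - 1))).
  assert (HK : 0 < K) by (apply Rinv_0_lt_compat, Rmult_lt_0_compat; apply lt_0_INR; lia).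
  destruct (Hblow (M / K)) as [eta [Heta Hbig]].
  destruct (continuity_pt_eps _ _
              (continuity_pt_dist d X T i j ltac:(intros; split; apply HX; auto)) eta Heta)
    as [r [Hr Hclose]].
  set (s := Rmax 0 (T - r / 2)).
  assert (Hs : 0 <= s < T /\ Rabs (s - T) < r).
  { unfold s, Rmax. destruct (Rle_dec 0 (T - r / 2)); split_Rabs; lra. }
  destruct Hs as [Hs Hsr].
  assert (Hgap : dist d (X s i) (X s j) > delta) by (apply Hcoll; auto).
  assert (Hlarge : M / K < f (dist d (X s i) (X s j) - delta)).
  { apply Hbig. specialize (Hclose s Hsr). revert Hclose; split_Rabs; lra. }
  pose proof (interaction_energy_ge_term N d delta f (X s) i j HN Hf0 (Hcoll s Hs) Hi Hj Hij).
  fold K in H. specialize (HM s Hs).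
  apply Rmult_lt_compat_l with (r := K) in Hlarge; [|exact HK].
  replace (K * (M / K)) with M in Hlarge by (field; lra). lra.
Qed.

Lemma kinetic_nonneg N d V : 0 <= kinetic N d V.
Proof. apply fsum_nonneg; intros; apply pow2_ge_0. Qed.

Definition log_barrier (s : R) : R := ln (s + 1) - ln s.

Lemma log_barrier_nonneg s : 0 < s -> 0 <= log_barrier s.
Proof.
  intros Hs. unfold log_barrier. assert (ln s < ln (s + 1)) by (apply ln_increasing; lra). lra.
Qed.

Lemma log_barrier_blows_up : blows_up_at_0 log_barrier.
Proof.
  intros M. exists (exp (- M)). split; [apply exp_pos|]. intros s [Hs Hsmall].
  unfold log_barrier.
  assert (ln s < - M) by (rewrite <- (ln_exp (- M)); now apply ln_increasing).
  assert (0 < ln (s + 1)) by (rewrite <- ln_1; apply ln_increasing; lra). lra.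
Qed.

Lemma derivable_pt_lim_log_barrier s : 0 < s ->
  derivable_pt_lim log_barrier s (/ (s + 1) - / s).
Proof.
  intros Hs. apply deriv_minus; [|now apply derivable_pt_lim_ln].
  apply (deriv_value _ _ (/ (s + 1) * (1 + 0))); [ring|].
  apply (deriv_comp (fun s => s + 1) ln); [|apply derivable_pt_lim_ln; lra].
  apply deriv_plus; [apply derivable_pt_lim_id|apply deriv_const].
Qed.

Lemma slope_dominated_log_barrier gamma : 1 / 2 < gamma ->
  slope_dominated gamma (2 * gamma) (/ (2 * gamma)) ((2 * gamma - 1) / (2 * gamma))
    (fun s => / (s + 1) - / s).
Proof.
  intros Hg. apply (slope_dominated_le _ _ _ _ (fun s => / s)); [|now apply slope_dominated_inv].
  intros s Hs.
  assert (/ (s + 1) < / s) by (apply Rinv_lt_contravar; nra).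
  assert (0 < / (s + 1)) by (apply Rinv_0_lt_compat; lra).
  rewrite Rabs_left, Rabs_right by lra. lra.
Qed.

Lemma Rpower_opp_blows_up beta : 0 < beta -> blows_up_at_0 (fun s => Rpower s (- beta)).
Proof.
  intros Hb M. set (m := Rabs M + 1).
  assert (Hm : 0 < m) by (unfold m; pose proof (Rabs_pos M); lra).
  exists (Rpower m (- / beta)). split; [apply Rpower_pos|]. intros s [Hs Hsmall].
  assert (Hlt : Rpower s beta < / m).
  { pose proof (Rlt_Rpower_l s (Rpower m (- / beta)) beta Hb (conj Hs Hsmall)) as Hp.
    rewrite Rpower_mult, <- Ropp_mult_distr_l, Rinv_l, Rpower_Ropp, Rpower_1 in Hp by lra.
    exact Hp. }
  rewrite Rpower_Ropp. apply Rinv_lt_contravar in Hlt; [|apply Rmult_lt_0_compat].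
  - rewrite Rinv_inv in Hlt. pose proof (Rle_abs M). unfold m in Hlt. lra.
  - apply Rpower_pos.
  - now apply Rinv_0_lt_compat.
Qed.

Lemma beta_pos_and_alpha gamma alpha : 0 < gamma -> 2 * gamma < alpha ->
  0 < alpha / (2 * gamma) - 1 /\ alpha = 2 * gamma * (alpha / (2 * gamma) - 1 + 1).
Proof.
  intros Hg Hlt. split; [|field; lra].
  apply Rlt_0_minus, (Rmult_lt_reg_l (2 * gamma)); [lra|]. field_simplify; lra.
Qed.

Lemma coefficient_split N gamma C1 A : 0 < gamma -> 0 < C1 -> (2 <= N)%nat ->
  A / (2 * C1 * gamma * (INR N - 1)) = A / (2 * gamma) / (C1 * (INR N - 1)).
Proof.
  intros Hg HC1 HN. assert (1 < INR N) by (apply (lt_INR 1); lia). field; repeat split; lra.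
Qed.

Section Dynamics.

Variables (N d : nat) (gamma C1 delta alpha : R) (Gamma : Vec -> Vec)
  (x v : R -> nat -> Vec).
Hypotheses (HN : (2 <= N)%nat) (HGamma : Gamma_on_Rd d Gamma) (HA1 : CS_A1 d Gamma)
  (HC1 : 0 < C1) (HA2 : CS_A2 d Gamma gamma C1) (Hdelta : 0 <= delta)
  (Hsol : CS_solution N d delta alpha Gamma x v).

Lemma clamped_solution_continuous i k t : (i < N)%nat -> (k < d)%nat -> 0 <= t ->
  continuity_pt (fun s => x (Rmax 0 s) i k) t /\ continuity_pt (fun s => v (Rmax 0 s) i k) t.
Proof.
  intros Hi Hk Ht. destruct Hsol as [Hcont _]. destruct (Hcont i k Hi Hk) as [Hx [Hv Hpos]].
  split; [apply (continuity_pt_clamp (fun s => x s i k))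
         |apply (continuity_pt_clamp (fun s => v s i k))]; auto; intros; now apply Hpos.
Qed.

Lemma energy_estimate f f' A B T :
  0 <= A -> (forall s, 0 < s -> derivable_pt_lim f s (f' s)) ->
  slope_dominated gamma alpha A B f' ->
  (forall s, 0 <= s < T -> collisionless N d delta (x s)) ->
  forall t, 0 <= t < T ->
  interaction_energy N d delta f (x t) + A / (C1 * (INR N - 1)) * kinetic N d (v t)
  <= B * t + (interaction_energy N d delta f (x 0)
              + A / (C1 * (INR N - 1)) * kinetic N d (v 0)).
Proof.
  intros HA Hf Hslope Hcoll t Ht.
  assert (Hcoll0 : collisionless N d delta (x 0)) by (apply Hcoll; lra).
  revert t Ht. destruct Hsol as [_ Hode].
  set (c := A / (C1 * (INR N - 1))).
  apply (linear_growth_of_rate_le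
    (fun s => interaction_energy N d delta f (x s) + c * kinetic N d (v s))
    (fun s => / (INR N * INR (N - 1)) * pair_sum N (fun i j =>
                f' (dist d (x s i) (x s j) - delta) * radial_velocity d (x s) (v s) i j)
              + c * (2 * fsum N (fun i => dot d (cs_force N d delta alpha Gamma (x s) (v s) i)
                                             (v s i))))).
  - intros s Hs. assert (Hs0 : 0 < s) by lra.
    assert (Hcs : collisionless N d delta (x s)) by (apply Hcoll; lra).
    apply deriv_plus.
    + apply derivable_pt_lim_interaction_energy; auto.
      intros i k Hi Hk. exact (proj1 (Hode s i k Hs0 Hcs Hi Hk)).
    + apply deriv_scal, derivable_pt_lim_kinetic.
      intros i k Hi Hk. exact (proj2 (Hode s i k Hs0 Hcs Hi Hk)).
  - intros s Hs. apply (energy_rate_le N d gamma C1); auto. apply Hcoll; lra.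
  - apply right_continuous_at_of_clamp. apply cont_plus.
    + apply (continuity_pt_interaction_energy N d delta f (fun s => x (Rmax 0 s))).
      * intros i k Hi Hk. apply clamped_solution_continuous; auto; lra.
      * now rewrite Rmax_right by lra.
      * intros s Hs. apply derivable_continuous_pt. exists (f' s). now apply Hf.
    + apply cont_mult; [apply cont_const|].
      apply (continuity_pt_kinetic N d (fun s => v (Rmax 0 s))).
      intros i k Hi Hk. apply clamped_solution_continuous; auto; lra.
Qed.

Lemma collisionless_forever f f' A B :
  collisionless N d delta (x 0) -> 0 <= A ->
  (forall s, 0 < s -> derivable_pt_lim f s (f' s)) -> slope_dominated gamma alpha A B f' ->
  (forall s, 0 < s -> 0 <= f s) -> blows_up_at_0 f ->
  forall t, 0 <= t -> collisionless N d delta (x t).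
Proof.
  intros H0 HA Hf Hslope Hf0 Hblow t1 Ht1. apply NNPP; intros Hbad.
  set (S := fun s => 0 <= s /\ forall u, 0 <= u <= s -> collisionless N d delta (x u)).
  assert (HS0 : S 0) by (split; [lra|intros u Hu; now replace u with 0 by lra]).
  destruct (completeness S) as [T [HTub HTlub]]; [|now exists 0|].
  { exists t1. intros s [Hs Hall]. apply Rnot_lt_le; intros Hlt. apply Hbad, Hall; lra. }
  assert (HT0 : 0 <= T) by now apply HTub.
  assert (Hbelow : forall u, 0 <= u < T -> collisionless N d delta (x u)).
  { intros u Hu. apply NNPP; intros Hn. enough (T <= u) by lra.
    apply HTlub. intros s [Hs Hall]. apply Rnot_lt_le; intros Hlt. apply Hn, Hall; lra. }
  set (X := fun s => x (Rmax 0 s)).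
  assert (HX : forall i k, (i < N)%nat -> (k < d)%nat -> continuity_pt (fun s => X s i k) T)
    by (intros; now apply clamped_solution_continuous).
  assert (HXT : collisionless N d delta (X T)).
  { destruct (Req_dec T 0) as [HT|HT]; [unfold X; rewrite HT, Rmax_right by lra; exact H0|].
    set (E0 := interaction_energy N d delta f (x 0) + A / (C1 * (INR N - 1)) * kinetic N d (v 0)).
    apply (collisionless_at_limit N d delta f (Rabs B * T + Rabs E0)); auto; [lra| |];
      intros s Hs; unfold X; rewrite Rmax_right by lra; [now apply Hbelow|].
    pose proof (energy_estimate f f' A B T HA Hf Hslope Hbelow s Hs) as Hest.
    assert (0 <= A / (C1 * (INR N - 1)) * kinetic N d (v s)).
    { apply Rmult_le_pos; [|apply kinetic_nonneg].
      unfold Rdiv; apply Rmult_le_pos, Rlt_le, Rinv_0_lt_compat; [exact HA|].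
      apply Rmult_lt_0_compat; [exact HC1|]. apply (le_INR 2) in HN. simpl in HN. lra. }
    assert (B * s <= Rabs B * T).
    { apply Rle_trans with (Rabs B * s); [apply Rmult_le_compat_r; [lra|apply Rle_abs]|].
      apply Rmult_le_compat_l; [apply Rabs_pos|lra]. }
    pose proof (Rle_abs E0). fold E0 in Hest. lra. }
  destruct (collisionless_near N d delta X T HX HXT) as [r [Hr Hnear]].
  assert (HSr : S (T + r / 2)).
  { split; [lra|]. intros u Hu. destruct (Rlt_le_dec u T) as [Hlt|Hge]; [apply Hbelow; lra|].
    specialize (Hnear u ltac:(split_Rabs; lra)). unfold X in Hnear.
    now rewrite Rmax_right in Hnear by lra. }
  specialize (HTub _ HSr). lra.
Qed.

Lemma collisionless_global : 1 / 2 < gamma -> 2 * gamma <= alpha ->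
  collisionless N d delta (x 0) -> forall t, 0 <= t -> collisionless N d delta (x t).
Proof.
  intros Hg Hal Hx0. destruct (Rle_lt_or_eq_dec _ _ Hal) as [Hlt|Heq].
  - destruct (beta_pos_and_alpha gamma alpha ltac:(lra) Hlt) as [Hb Halpha].
    apply (collisionless_forever (fun s => Rpower s (- (alpha / (2 * gamma) - 1))) _
             ((alpha / (2 * gamma) - 1) / (2 * gamma)) _ Hx0
             ltac:(apply Rlt_le, Rdiv_lt_0_compat; lra)
             (fun s Hs => derivable_pt_lim_power s _ Hs)
             (slope_dominated_power gamma alpha _ Hg Hb Halpha));
      [intros; apply Rlt_le, Rpower_pos|now apply Rpower_opp_blows_up].
  - apply (collisionless_forever log_barrier (fun s => / (s + 1) - / s) (/ (2 * gamma))
             ((2 * gamma - 1) / (2 * gamma)) Hx0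
             ltac:(apply Rlt_le, Rinv_0_lt_compat; lra) derivable_pt_lim_log_barrier);
      [rewrite <- Heq; now apply slope_dominated_log_barrier
      |exact log_barrier_nonneg|exact log_barrier_blows_up].
Qed.

End Dynamics.

Theorem theorem2 (N d : nat) (gamma C1 delta alpha : R)
  (Gamma : Vec -> Vec) (x v : R -> nat -> Vec) :
  (2 <= N)%nat ->
  1 / 2 < gamma < 3 / 2 ->
  Gamma_on_Rd d Gamma ->
  CS_A1 d Gamma ->
  0 < C1 -> CS_A2 d Gamma gamma C1 ->
  0 <= delta -> 2 * gamma <= alpha ->
  collisionless N d delta (x 0) ->
  CS_solution N d delta alpha Gamma x v ->
  (forall t, 0 <= t -> collisionless N d delta (x t)) /\
  (alpha = 2 * gamma -> forall t, 0 <= t ->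
     L0 N d delta (x t) + 1 / (2 * C1 * gamma * (INR N - 1)) * kinetic N d (v t)
     <= (2 * gamma - 1) / (2 * gamma) * t + L0 N d delta (x 0)
        + 1 / (2 * C1 * gamma * (INR N - 1)) * kinetic N d (v 0)) /\
  (2 * gamma < alpha -> forall t, 0 <= t ->
     let beta := alpha / (2 * gamma) - 1 in
     Lbeta N d delta beta (x t) + beta / (2 * C1 * gamma * (INR N - 1)) * kinetic N d (v t)
     <= (2 * gamma - 1) * beta / (2 * gamma) * t + Lbeta N d delta beta (x 0)
        + beta / (2 * C1 * gamma * (INR N - 1)) * kinetic N d (v 0)).
Proof.
  intros HN [Hg _] HGamma HA1 HC1 HA2 Hdelta Hal Hx0 Hsol.
  pose proof (collisionless_global N d gamma C1 delta alpha Gamma x v HN HGamma HA1 HC1 HA2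
                Hdelta Hsol Hg Hal Hx0) as Hcoll.
  split; [exact Hcoll|split].
  - intros -> t Ht. rewrite coefficient_split, Rdiv_1_l by (lra || exact HN).
    change (L0 N d delta) with (interaction_energy N d delta ln).
    pose proof (energy_estimate N d gamma C1 delta (2 * gamma) Gamma x v HN HGamma HA1 HC1 HA2
                  Hdelta Hsol ln _ (/ (2 * gamma)) _ (t + 1)
                  ltac:(apply Rlt_le, Rinv_0_lt_compat; lra)
                  derivable_pt_lim_ln (slope_dominated_inv gamma Hg)
                  ltac:(intros; apply Hcoll; lra) t ltac:(lra)).
    lra.
  - intros Hlt t Ht beta. rewrite coefficient_split by (lra || exact HN).
    destruct (beta_pos_and_alpha gamma alpha ltac:(lra) Hlt) as [Hb Halpha].
    fold beta in Hb, Halpha.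
    change (Lbeta N d delta beta) with (interaction_energy N d delta (fun s => Rpower s (- beta))).
    pose proof (energy_estimate N d gamma C1 delta alpha Gamma x v HN HGamma HA1 HC1 HA2
                  Hdelta Hsol _ _ (beta / (2 * gamma)) _ (t + 1)
                  ltac:(apply Rlt_le, Rdiv_lt_0_compat; lra)
                  (fun s Hs => derivable_pt_lim_power s (- beta) Hs)
                  (slope_dominated_power gamma alpha _ Hg Hb Halpha)
                  ltac:(intros; apply Hcoll; lra) t ltac:(lra)).
    lra.
Qed.
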